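(* Let $p$ be a prime and let $G$ be a finite $p$-group. If every connected component of $\mathcal{P}^*(G)$ is a clique, then $\pi(\kappa(G))=\{p\}$.
   Context: For a finite group $G$, the power graph $\mathcal{P}(G)$ is the simple undirected graph with vertex set $G$, two distinct vertices $x,y$ being adjacent iff $\langle x\rangle\subseteq\langle y\rangle$ or $\langle y\rangle\subseteq\langle x\rangle$; $\mathcal{P}^*(G)$ is obtained from $\mathcal{P}(G)$ by deleting the vertex $1$. $\kappa(G)$ is the number of spanning trees of $\mathcal{P}(G)$, and for a positive integer $n$, $\pi(n)$ is the set of prime divisors of $n$.
   Formalization: G is also assumed to contain an element of order greater than 2. The statement above fails without it. *)

From mathcomp Require Import all_boot all_order all_fingroup all_solvable.
Set Implicit Arguments. Unset Strict Implicit. Unset Printing Implicit Defensive.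
Local Open Scope group_scope.

Section PowerGraph.
Variable gT : finGroupType.

Definition pg_adj (x y : gT) : bool :=
  (x != y) && ((<[x]> \subset <[y]>) || (<[y]> \subset <[x]>)).

Definition pg_edges (G : {set gT}) : {set {set gT}} :=
  [set [set x; y] | x in G, y in G & pg_adj x y].

Definition edge_rel (T : {set {set gT}}) : rel gT :=
  fun u v => [set u; v] \in T.

(* the graph with edge set T has no cycle (cycle = closed walk through >= 3
   pairwise distinct vertices; such a cycle has at most #|gT| vertices) *)
Definition acyclic (T : {set {set gT}}) : bool :=
  [forall n : 'I_#|gT|.+1, forall s : (nat_of_ord n).-tuple gT,
     (3 <= n)%N ==> ~~ ucycleb (edge_rel T) s].

Definition pg_spanning_tree (G : {set gT}) (T : {set {set gT}}) : bool :=
  [&& T \subset pg_edges G,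
      [forall x in G, forall y in G, connect (edge_rel T) x y]
    & acyclic T].

Definition kappa (G : {set gT}) : nat :=
  #|[set T : {set {set gT}} | pg_spanning_tree G T]|.

Definition pgstar_adj (G : {set gT}) : rel gT :=
  fun x y => [&& x \in G^#, y \in G^# & pg_adj x y].

Definition components_are_cliques (G : {set gT}) : Prop :=
  forall x y, x \in G^# -> y \in G^# -> x != y ->
    connect (pgstar_adj G) x y -> pg_adj x y.

End PowerGraph.

(* Rooting a spanning tree of P(G) at 1 and sending each non-identity vertex to its parent
   identifies the spanning trees with the maps f on G^# such that f x is adjacent to x and every
   f-orbit reaches 1.  If the components of P*(G) are cliques, each of them is <[w]>^# for an
   element w of maximal order in it, so P(G) consists of the complete graphs on the subgroups
   <[w]> glued at 1.  The maps then split over the components, and Cayley's formula counts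
   #[w]^(#[w]-2) of them on <[w]>.  In a p-group every #[w] is a power of p, so kappa(G) is a
   power of p, and it is not 1 because some #[w] exceeds 2. *)

From mathcomp Require Import all_boot all_order all_fingroup all_solvable.
From mathcomp Require Import zify ring.
Set Implicit Arguments. Unset Strict Implicit. Unset Printing Implicit Defensive.

(** * Iterated maps *)

Section Iteration.
Variable T : finType.
Implicit Types (f h : T -> T) (S R : {set T}).

Lemma fconnect_iterP f x y : reflect (exists n, iter n f x = y) (fconnect f x y).
Proof.
apply: (iffP idP) => [/iter_findex <- | [n <-]]; last exact: fconnect_iter.
by exists (findex f x y).
Qed.

Lemma eq_iter_on f h x n :
  (forall i, i < n -> f (iter i h x) = h (iter i h x)) -> iter n f x = iter n h x.
Proof.
elim: n => //= n IHn eq_fh; rewrite IHn => [|i lt_in]; last by apply: eq_fh; lia.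
exact: eq_fh.
Qed.

Lemma fconnect_eq_on f h x y :
  (forall i, f (iter i h x) = h (iter i h x)) -> fconnect h x y -> fconnect f x y.
Proof.
move=> eq_fh /fconnect_iterP[n <-]; apply/fconnect_iterP; exists n.
by apply: eq_iter_on => i _; apply: eq_fh.
Qed.

Lemma findex_le f x y n : iter n f x = y -> findex f x y <= n.
Proof.
move=> itn; have [lt_n_ord | ge_n_ord] := ltnP n (fingraph.order f x).
  by rewrite -itn findex_iter.
by rewrite ltnW // (leq_trans _ ge_n_ord) // findex_max // -itn fconnect_iter.
Qed.

Lemma findex_step f x y : x != y -> fconnect f x y ->
  findex f (f x) y < findex f x y.
Proof.
move=> neq_xy /iter_findex; rewrite -(findex_eq0 f) in neq_xy.
by case: (findex f x y) neq_xy => [// | n _]; rewrite iterSr ltnS => /findex_le.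
Qed.

Lemma iter_two_cycle f y n :
  f (f y) = y -> iter n f y \in [set y; f y].
Proof.
move=> ffy; elim: n => [|n]; first exact: set21.
by case/set2P=> /= ->; rewrite ?ffy ?set21 ?set22.
Qed.

Definition reaches f R x := [exists y in R, fconnect f x y].

Lemma reachesP f R x : reflect
  (exists2 n, iter n f x \in R & forall i, i < n -> iter i f x \notin R)
  (reaches f R x).
Proof.
apply: (iffP existsP) => [[y /andP[yR /fconnect_iterP[n itn]]] | [n itnR _]].
  have hitR : exists n, iter n f x \in R by exists n; rewrite itn.
  case: (ex_minnP hitR) => m itmR min_m; exists m => // i lt_im.
  by apply/negP => /min_m; lia.
by exists (iter n f x); rewrite itnR fconnect_iter.
Qed.

Lemma eq_on_reaches f h S x : {in [predC S], f =1 h} -> reaches f S x = reaches h S x.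
Proof.
wlog suff: f h / {in [predC S], f =1 h} -> reaches f S x -> reaches h S x.
  by move=> imp eq_fh; apply/idP/idP; apply: imp => // y /eq_fh.
move=> eq_fh /reachesP[n itnS before_n]; apply/reachesP.
have eq_it i : i <= n -> iter i h x = iter i f x.
  by move=> le_in; apply: eq_iter_on => j lt_ji; apply/esym/eq_fh/before_n; lia.
exists n => [|i lt_in]; first by rewrite eq_it.
by rewrite eq_it ?before_n // ltnW.
Qed.

Lemma reaches_step f S R x : {in S, forall s, f s \in R} -> reaches f S x -> reaches f R x.
Proof.
move=> fSR /existsP[s /andP[sS xs]]; apply/existsP; exists (f s).
by rewrite fSR //= (connect_trans xs) ?fconnect1.
Qed.

End Iteration.

Lemma eq_set2 (T : finType) (a b c d : T) :
  [set a; b] = [set c; d] -> (a = c /\ b = d) \/ (a = d /\ b = c).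
Proof.
move=> eq_ab_cd.
have a_cd : a \in [set c; d] by rewrite -eq_ab_cd set21.
have b_cd : b \in [set c; d] by rewrite -eq_ab_cd set22.
have c_ab : c \in [set a; b] by rewrite eq_ab_cd set21.
have d_ab : d \in [set a; b] by rewrite eq_ab_cd set22.
case/set2P: a_cd => ea; case/set2P: b_cd => eb; case/set2P: c_ab => ec; case/set2P: d_ab => ed.
all: by subst; tauto.
Qed.

(* On a cycle, the two neighbours of a vertex maximizing [d] would both be its image by [f]. *)
Lemma no_descent_ucycle (T : finType) (e : rel T) (f : T -> T) (d : T -> nat) (s : seq T) :
  (forall u v, e u v -> (f u = v /\ d v < d u) \/ (f v = u /\ d u < d v)) ->
  3 <= size s -> uniq s -> ~~ path.cycle e s.
Proof.
move=> e_descent; case: s => [// | x0 s0] size_s uniq_s; set s := x0 :: s0 in size_s uniq_s *.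
have [v vs v_max] := @arg_maxnP _ x0 (mem s) d (mem_head x0 s0).
have [i s' def_s] := rot_to vs; rewrite -(rot_cycle i) def_s.
have : uniq (v :: s') by rewrite -def_s rot_uniq.
have : 3 <= size (v :: s') by rewrite -def_s size_rot.
have le_dv y : y \in v :: s' -> d y <= d v by rewrite -def_s mem_rot => /v_max.
case: s' le_dv {def_s} => [|a [|c t]] //= le_dv _ /andP[_ /andP[a_notin _]].
apply/negP => /and3P[e_va _]; rewrite rcons_path => /andP[_ e_bv].
have b_in : last c t \in c :: t by apply: mem_last.
have fv_a : f v = a.
  have [[] // | [_ lt_va]] := e_descent _ _ e_va.
  by have := le_dv a; rewrite !inE eqxx orbT leqNgt lt_va => /(_ isT).
have [[_ lt_bv] | [fv_b _]] := e_descent _ _ e_bv.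
  by have := le_dv (last c t); rewrite 2!in_cons b_in !orbT leqNgt lt_bv => /(_ isT).
by rewrite -fv_b fv_a (negPf a_notin) in b_in.
Qed.

Section RootDistance.
Variables (T : finType) (e : rel T) (r : T).

Lemma root_dist_ex x :
  exists n, [exists s : n.-tuple T, path e x s && (last x s == r)] || ~~ connect e x r.
Proof.
have [/connectP[s e_s last_s] | ] := boolP (connect e x r); last by exists 0; rewrite orbT.
by exists (size s); apply/orP; left; apply/existsP; exists (in_tuple s); rewrite e_s last_s /=.
Qed.

(* The length of a shortest [e]-path from [x] to [r], and [0] if there is none. *)
Definition root_dist x := ex_minn (root_dist_ex x).

Lemma root_dist_min x (s : seq T) : path e x s -> last x s = r -> root_dist x <= size s.
Proof.
move=> e_s last_s; rewrite /root_dist; case: ex_minnP => n _; apply; apply/orP; left.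
by apply/existsP; exists (in_tuple s); rewrite /= e_s last_s eqxx.
Qed.

Lemma root_dist_step x : x != r -> connect e x r -> exists y, e x y && (root_dist y < root_dist x).
Proof.
move=> neq_xr c_xr; rewrite {2}/root_dist; case: ex_minnP => n; rewrite c_xr orbF.
case/existsP=> s /andP[e_s /eqP last_s] _; rewrite -(size_tuple s).
case: (tval s) e_s last_s => [_ /= xr | y s' /= /andP[e_xy e_s'] last_s'].
  by rewrite xr eqxx in neq_xr.
by exists y; rewrite e_xy ltnS root_dist_min.
Qed.

End RootDistance.

(** * Cayley's formula for rooted forests *)

Definition forest_count m k := if m is 0 then 1 else k * (m + k) ^ m.-1.

Lemma forest_count_summand m k i : i < m ->
  m * ('C(m, i.+1) * k ^ i.+1 * forest_count (m - i.+1) i.+1)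
    = m * k * ('C(m.-1, i) * (m ^ (m.-1 - i) * k ^ i)).
Proof.
move=> lt_i_m; have bin_diag := mul_bin_diag m i.
have [lt_i1_m | ge_i1_m] := ltnP i.+1 m; last first.
  have def_m : m = i.+1 by lia.
  by rewrite def_m !subnn !binn /= expnS; ring.
have [e def_e] : exists e, m - i.+1 = e.+1 by exists (m - i.+1).-1; lia.
have -> : m.-1 - i = e.+1 by lia.
rewrite def_e /= (_ : e.+1 + i.+1 = m); last by lia.
rewrite !expnS; set ki := k ^ i; set me := m ^ e.
transitivity (m * ('C(m, i.+1) * i.+1) * k * ki * me); first by ring.
by rewrite [_ * i.+1]mulnC -bin_diag; ring.
Qed.

(* Abel's identity: the recursion of [card_forest_maps] over the set of children of the roots. *)
Lemma forest_count_rec m k : 0 < m ->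
  \sum_(i < m) 'C(m, i.+1) * k ^ i.+1 * forest_count (m - i.+1) i.+1 = forest_count m k.
Proof.
move=> m_gt0; apply/eqP; rewrite -(eqn_pmul2l m_gt0) big_distrr /=; apply/eqP.
rewrite (eq_bigr _ (fun i _ => forest_count_summand k (ltn_ord i))) -big_distrr /=.
by case: m m_gt0 => // m _; rewrite /= -expnDn addSn addnC; ring.
Qed.

Section ForestMaps.
Variable T : finType.
Implicit Types (A R S : {set T}) (f g h : {ffun T -> T}).

(* The parent maps of the rooted forests on [A :|: R] whose roots are the vertices of [R]. *)
Definition forest_maps A R := [set f : {ffun T -> T} | [forall x,
  if x \in A then (f x \in A :|: R) && reaches f R x else f x == x]].

Lemma forest_mapsP A R f : reflect
  (forall x, if x \in A then (f x \in A :|: R) && reaches f R x else f x == x)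
  (f \in forest_maps A R).
Proof. by rewrite inE; apply: forallP. Qed.

Definition root_children A R f := [set x in A | f x \in R].

Definition patch S g h := [ffun x => if x \in S then g x else h x].

Lemma forest_maps_set0 R : forest_maps set0 R = [set [ffun x => x]].
Proof.
apply/setP => f; rewrite in_set1; apply/forest_mapsP/eqP => [fixf | -> x].
  by apply/ffunP => x; rewrite ffunE; have := fixf x; rewrite inE => /eqP.
by rewrite inE ffunE.
Qed.

Section Disjoint.
Variables A R : {set T}.
Hypothesis disjAR : [disjoint A & R].

Lemma forest_maps_iter_in f x n : f \in forest_maps A R -> x \in A ->
  (forall i, i <= n -> iter i f x \notin R) -> iter n f x \in A.
Proof.
move=> /forest_mapsP fAR xA; elim: n => // n IHn before_n.
have itnA : iter n f x \in A by apply: IHn => i lt_in; apply: before_n; lia.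
have := fAR (iter n f x); rewrite itnA inE => /andP[/orP[] // itn1R _].
by have := before_n n.+1 (leqnn _); rewrite /= itn1R.
Qed.

Lemma forest_maps_reaches_children f x : f \in forest_maps A R -> x \in A ->
  reaches f (root_children A R f) x.
Proof.
move=> fAR xA; have /forest_mapsP/(_ x) := fAR; rewrite xA => /andP[_].
case/reachesP=> [[|n] itnR before_n]; first by rewrite /= (disjointFr disjAR xA) in itnR.
have itnA : iter n f x \in A.
  by apply: forest_maps_iter_in => // i le_in; apply: before_n.
apply/existsP; exists (iter n f x); rewrite inE itnA -iterS itnR.
exact: fconnect_iter.
Qed.

Lemma patch_forest_maps y0 S g h : S \subset A -> g \in pffun_on y0 S R ->
  h \in forest_maps (A :\: S) S ->
  patch S g h \in forest_maps A R /\ root_children A R (patch S g h) = S.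
Proof.
move=> sSA /pffun_onP[/supportP g_off gSR] /forest_mapsP hAS.
have gR x : x \in S -> g x \in R by move=> xS; apply/gSR/image_f.
have hA x : x \in A :\: S -> h x \in A.
  move=> xAS; have := hAS x; rewrite xAS => /andP[]; rewrite !inE.
  by case/orP=> [/andP[] | /(subsetP sSA)].
have eq_off_S : {in [predC S], patch S g h =1 h} by move=> x /negPf xS; rewrite ffunE xS.
split.
  apply/forest_mapsP => x; rewrite ffunE; have [xS | xS] := boolP (x \in S).
    rewrite (subsetP sSA) // inE gR ?orbT //=; apply/existsP; exists (g x).
    by rewrite gR //; have := fconnect1 (patch S g h) x; rewrite ffunE xS.
  have [xA | xA] := ifPn; last by have := hAS x; rewrite inE (negPf xS) (negPf xA).
  have xAS : x \in A :\: S by rewrite inE xS xA.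
  rewrite inE hA //=; apply: (reaches_step (S := S)) => [s sS | ].
    by rewrite ffunE sS gR.
  by rewrite (eq_on_reaches _ eq_off_S); have := hAS x; rewrite xAS => /andP[].
apply/setP => x; rewrite !inE ffunE; have [xS | xS] := ifPn; first by rewrite (subsetP sSA) ?gR.
case xA: (x \in A) => //=; have xAS : x \in A :\: S by rewrite inE xS xA.
by rewrite (disjointFr disjAR (hA x xAS)).
Qed.

Lemma forest_maps_above_children f (S := root_children A R f) :
  f \in forest_maps A R -> [ffun x => if x \in S then x else f x] \in forest_maps (A :\: S) S.
Proof.
move=> fAR; have /forest_mapsP fAR' := fAR; apply/forest_mapsP => x; rewrite ffunE.
have [xS | xS] := boolP (x \in S); first by rewrite in_setD xS /=.
have [xA | xA] := boolP (x \in A); last first.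
  by have := fAR' x; rewrite (negPf xA) in_setD (negPf xA) andbF.
have := fAR' x; rewrite xA => /andP[fxAR _].
rewrite in_setD xS xA /=; apply/andP; split.
  have fxR : f x \notin R by rewrite inE xA in xS.
  by rewrite !inE; move: fxAR; rewrite inE (negPf fxR) orbF => ->; rewrite andbT orNb.
rewrite (eq_on_reaches (h := f)); first exact: forest_maps_reaches_children.
by move=> y /negPf yS; rewrite ffunE yS.
Qed.

Lemma card_forest_maps_children (y0 : T) S : S \subset A ->
  #|[set f in forest_maps A R | root_children A R f == S]|
    = #|R| ^ #|S| * #|forest_maps (A :\: S) S|.
Proof.
move=> sSA; rewrite -(card_pffun_on y0) -(cardsE (pffun_on y0 S R)) -cardsX.
have -> : [set f in forest_maps A R | root_children A R f == S] =
    (fun gh => patch S gh.1 gh.2) @: setX [set g in pffun_on y0 S R] (forest_maps (A :\: S) S).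
  apply/setP => f; apply/idP/imsetP => [| [[g h]]]; last first.
    case/setXP; rewrite inE => gP hP ->.
    by have [pAR chS] := patch_forest_maps sSA gP hP; rewrite in_set /= pAR chS eqxx.
  rewrite inE => /andP[fAR /eqP defS].
  exists ([ffun x => if x \in S then f x else y0], [ffun x => if x \in S then x else f x]).
    apply/setXP; split; last by rewrite -defS forest_maps_above_children.
    rewrite inE; apply/pffun_onP; split; first by apply/supportP => x /negPf xS; rewrite ffunE xS.
    by move=> _ /imageP[x xS ->]; rewrite ffunE xS; move: xS; rewrite -defS inE => /andP[].
  by apply/ffunP => x; rewrite !ffunE; case: (x \in S).
rewrite card_in_imset // => -[g1 h1] [g2 h2] /setXP[].
rewrite inE => /pffun_onP[/supportP g1_off _].
move/forest_mapsP=> h1AS /setXP[]; rewrite inE => /pffun_onP[/supportP g2_off _].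
move/forest_mapsP=> h2AS /= /ffunP eq12.
congr pair; apply/ffunP => x; have := eq12 x; rewrite !ffunE.
  by have [// | xS] := ifPn; rewrite g1_off ?g2_off.
have [xS | xS] := ifPn => // _.
by have := h1AS x; have := h2AS x; rewrite inE xS => /eqP -> /eqP ->.
Qed.

End Disjoint.

Lemma sum_subset_card A (F : nat -> nat) :
  \sum_(S : {set T} | S \subset A) F #|S| = \sum_(j < #|A|.+1) 'C(#|A|, j) * F j.
Proof.
rewrite (partition_big (fun S : {set T} => inord #|S| : 'I_(#|A|.+1)) xpredT) //=.
apply: eq_bigr => j _; rewrite (eq_bigr (fun _ => F j)); last first.
  by move=> S /andP[sSA /eqP <-]; rewrite inordK // ltnS subset_leq_card.
rewrite sum_nat_const -cards_draws; congr (_ * _); apply: eq_card => S.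
rewrite !inE unfold_in /=; have [sSA | //] := boolP (S \subset A).
have ltSA : #|S| < #|A|.+1 by rewrite ltnS subset_leq_card.
apply/eqP/eqP => [<- | def_j]; first by rewrite inordK.
by apply: val_inj; rewrite /= -def_j inordK.
Qed.

Theorem card_forest_maps A R : [disjoint A & R] -> #|forest_maps A R| = forest_count #|A| #|R|.
Proof.
have [n] := ubnP #|A|; elim: n A R => // n IHn A R ltAn disjAR.
have [-> | /set0Pn[x0 x0A]] := eqVneq A set0; first by rewrite forest_maps_set0 cards1 cards0.
have A_gt0 : 0 < #|A| by apply/card_gt0P; exists x0.
rewrite -sum1_card (partition_big (root_children A R) (fun S => S \subset A)); last first.
  by move=> f _; apply/subsetP => x; rewrite inE => /andP[].
pose F j := if j is 0 then 0 else #|R| ^ j * forest_count (#|A| - j) j.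
rewrite (eq_bigr (fun S => F #|S|)) => [|S sSA]; last first.
  rewrite sum1dep_card /F; have [-> | /set0Pn[y0 y0S]] := eqVneq S set0.
    rewrite cards0; apply: eq_card0 => f; rewrite inE; apply/andP => -[fAR /eqP noS].
    by have /existsP[y] := forest_maps_reaches_children disjAR fAR x0A; rewrite noS inE.
  have leSA : #|S| <= #|A| by rewrite subset_leq_card.
  have S_gt0 : 0 < #|S| by apply/card_gt0P; exists y0.
  rewrite (card_forest_maps_children disjAR y0 sSA) IHn; last 2 first.
  - by rewrite cardsD (setIidPr sSA); lia.
  - by rewrite disjoint_sym disjoints_subset setCD subsetUr.
  by rewrite cardsD (setIidPr sSA); case: #|S| S_gt0.
rewrite sum_subset_card big_ord_recl /= muln0 add0n -(forest_count_rec _ A_gt0).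
by apply: eq_bigr => i _; rewrite mulnA.
Qed.

End ForestMaps.

(** * Parent maps of rooted spanning trees *)

Section ParentMaps.
Variables (T : finType) (e : rel T) (r : T).
Implicit Types (A B C : {set T}) (f g : {ffun T -> T}).

(* For [A = V :\ r], these encode the spanning trees of the graph [e] on [V] rooted at [r]:
   [f] sends each vertex of [A] to its parent. *)
Definition parent_maps A := [set f : {ffun T -> T} | [forall x,
  if x \in A then e x (f x) && fconnect f x r else f x == x]].

Lemma parent_mapsP A f : reflect
  (forall x, if x \in A then e x (f x) && fconnect f x r else f x == x)
  (f \in parent_maps A).
Proof. by rewrite inE; apply: forallP. Qed.

Definition nbhd_closed A := {in A, forall x y, e x y -> y \in r |: A}.

Lemma parent_maps_out A f x : f \in parent_maps A -> x \notin A -> f x = x.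
Proof. by move=> /parent_mapsP/(_ x) + /negPf xA; rewrite xA => /eqP. Qed.

Section Restriction.
Variables (A C : {set T}) (f : {ffun T -> T}).
Hypotheses (rA : r \notin A) (sCA : C \subset A) (clC : nbhd_closed C).
Hypothesis fA : f \in parent_maps A.

Lemma iter_parent_maps_closed x n : x \in r |: C -> iter n f x \in r |: C.
Proof.
move=> xC; elim: n => //= n; rewrite [in X in X -> _]in_setU1.
case/orP=> [/eqP -> | itC]; first by rewrite (parent_maps_out fA) // setU11.
have /parent_mapsP/(_ (iter n f x)) := fA; rewrite (subsetP sCA) // => /andP[e_it _].
exact: clC e_it.
Qed.

Lemma parent_maps_fconnect_eq_on g x : {in C, g =1 f} -> g r = r -> x \in C -> fconnect g x r.
Proof.
move=> eq_gf gr xC; have /parent_mapsP/(_ x) := fA; rewrite (subsetP sCA) // => /andP[_].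
apply: fconnect_eq_on => i; have := iter_parent_maps_closed i (setU1r r xC).
by case/setU1P=> [-> | /eq_gf //]; rewrite gr (parent_maps_out fA).
Qed.

Lemma parent_maps_restr : [ffun x => if x \in C then f x else x] \in parent_maps C.
Proof.
have rC : r \notin C by apply: contra rA; apply: subsetP.
apply/parent_mapsP => x; have [xC | xC] := boolP (x \in C); last by rewrite ffunE (negPf xC).
have /parent_mapsP/(_ x) := fA; rewrite (subsetP sCA) // ffunE xC => /andP[-> _] /=.
by apply: parent_maps_fconnect_eq_on => // [y yC|]; rewrite ffunE ?yC ?(negPf rC).
Qed.

End Restriction.

Lemma nbhd_closedD A B : symmetric e -> r \notin A ->
  nbhd_closed A -> nbhd_closed B -> nbhd_closed (A :\: B).
Proof.
move=> sym_e rA clA clB x /setDP[xA xB] y exy; rewrite in_setU1 in_setD.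
have /setU1P[-> | yA] := clA x xA y exy; first by rewrite eqxx.
suff -> : y \notin B by rewrite yA orbT.
apply: contraNN xB => yB; have /setU1P[xr | //] := clB y yB x ltac:(by rewrite sym_e).
by rewrite -xr xA in rA.
Qed.

Lemma card_parent_maps_setD A B : r \notin A -> B \subset A ->
  nbhd_closed B -> nbhd_closed (A :\: B) ->
  #|parent_maps A| = #|parent_maps B| * #|parent_maps (A :\: B)|.
Proof.
move=> rA sBA clB clAB; set A' := A :\: B; have sA'A : A' \subset A := subsetDl A B.
have [rB rA'] : r \notin B /\ r \notin A' by split; apply: contra rA; apply: subsetP.
rewrite -cardsX -(@card_in_imset _ _ (fun fg => patch B fg.1 fg.2)); last first.
  move=> [f1 f2] [g1 g2] /setXP[/= f1B f2A'] /setXP[/= g1B g2A'] /ffunP eq_fg.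
  congr pair; apply/ffunP => x; have := eq_fg x; rewrite !ffunE.
    by case: ifPn => // xB _; rewrite (parent_maps_out f1B xB) (parent_maps_out g1B xB).
  have [xB _ | //] := ifPn; have xA' : x \notin A' by rewrite inE xB.
  by rewrite (parent_maps_out f2A' xA') (parent_maps_out g2A' xA').
apply: eq_card => f; apply/idP/imsetP => [fA | [[f1 f2] /setXP[/= f1B f2A'] ->]].
  exists ([ffun x => if x \in B then f x else x], [ffun x => if x \in A' then f x else x]).
    by apply/setXP; split; [apply: (parent_maps_restr rA sBA) | apply: (parent_maps_restr rA sA'A)].
  apply/ffunP => x; rewrite !ffunE; have [// | xB] := boolP (x \in B).
  have [// | xA'] := boolP (x \in A'); rewrite (parent_maps_out fA) //.
  by apply: contra xA' => xA; rewrite inE xB.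
have p_r : patch B f1 f2 r = r by rewrite ffunE (negPf rB) (parent_maps_out f2A').
apply/parent_mapsP => x; rewrite ffunE; have [xB | xB] := boolP (x \in B).
  have /parent_mapsP/(_ x) := f1B; rewrite xB (subsetP sBA) // => /andP[-> _] /=.
  by apply: (parent_maps_fconnect_eq_on rB (subxx B) clB f1B) => // y yB; rewrite ffunE yB.
have [xA | xA] := ifPn; last by rewrite (parent_maps_out f2A') // inE (negPf xA) andbF.
have xA' : x \in A' by rewrite inE xB.
have /parent_mapsP/(_ x) := f2A'; rewrite xA' => /andP[-> _] /=.
apply: (parent_maps_fconnect_eq_on rA' (subxx A') clAB f2A') => // y.
by rewrite inE => /andP[/negPf yB _]; rewrite ffunE yB.
Qed.

Lemma parent_maps_clique B : r \notin B ->
  {in B, forall x y, e x y = (y \in r |: B) && (y != x)} ->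
  parent_maps B = forest_maps B [set r].
Proof.
move=> rB e_B; apply/setP => f; apply/parent_mapsP/forest_mapsP => fB x.
  have := fB x; case: ifP => // xB /andP[]; rewrite e_B // setUC => /andP[-> _] xr /=.
  by apply/existsP; exists r; rewrite set11.
have := fB x; case: ifP => // xB /andP[]; rewrite e_B // setUC => -> /existsP[y].
rewrite inE => /andP[/eqP-> xr]; rewrite xr andbT; apply: contraNneq rB => fx_x.
have /fconnect_iterP[n <-] := xr.
by have -> : iter n f x = x by elim: n => //= n ->.
Qed.

Lemma card_parent_maps_clique B : r \notin B ->
  {in B, forall x y, e x y = (y \in r |: B) && (y != x)} ->
  #|parent_maps B| = #|B|.+1 ^ #|B|.-1.
Proof.
move=> rB e_B; rewrite parent_maps_clique // card_forest_maps ?cards1.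
  by case: #|B| => //= n; rewrite mul1n addn1.
by rewrite disjoint_sym disjoints_subset sub1set inE.
Qed.

End ParentMaps.

(** * Spanning trees of the power graph *)

Section Acyclic.
Variable gT : finGroupType.
Implicit Types (T : {set {set gT}}) (u w : gT).

Lemma edge_rel_sym T : symmetric (edge_rel T).
Proof. by move=> u w; rewrite /edge_rel setUC. Qed.

Lemma acyclic_bridge T u w : acyclic T -> [set u; w] \in T -> u != w ->
  ~~ connect (edge_rel (T :\ [set u; w])) u w.
Proof.
move=> /forallP acycT Tuw neq_uw; apply/negP => /connectP[p0 e_p0 last_p0].
have sub_e : subrel (edge_rel (T :\ [set u; w])) (edge_rel T).
  by move=> a b; rewrite /edge_rel inE => /andP[].
case: (shortenP e_p0) last_p0 => p e_p uniq_p _ {p0 e_p0}.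
case: p e_p uniq_p => [|a [|b q]] e_p uniq_p /= last_p.
- by rewrite last_p eqxx in neq_uw.
- by move: e_p; rewrite /= last_p /edge_rel !inE eqxx.
set s := [:: u, a, b & q].
have size_s : size s < #|gT|.+1 by rewrite ltnS -(card_uniqP uniq_p) max_card.
have /forallP/(_ (in_tuple s)) := acycT (Ordinal size_s).
rewrite /= /ucycleb uniq_p andbT => /negP; apply.
rewrite /s /path.cycle rcons_path (sub_path sub_e e_p) /=.
by rewrite -last_p /edge_rel setUC Tuw.
Qed.

End Acyclic.

Section PowerGraph.
Variables (gT : finGroupType) (G : {group gT}).
Implicit Types (x y : gT) (f : {ffun gT -> gT}) (T : {set {set gT}}).
Local Open Scope group_scope.

Lemma pg_adj_sym : symmetric (@pg_adj gT).
Proof. by move=> x y; rewrite /pg_adj eq_sym orbC. Qed.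

Lemma pg_adjxx x : pg_adj x x = false.
Proof. by rewrite /pg_adj eqxx. Qed.

Lemma pg_adj1 x : x != 1 -> pg_adj x 1.
Proof. by move=> x1; rewrite /pg_adj x1 cycle1 sub1G orbT. Qed.

Definition pg_rel : rel gT := fun x y => [&& x \in G, y \in G & pg_adj x y].

Lemma pg_rel_sym : symmetric pg_rel.
Proof. by move=> x y; rewrite /pg_rel pg_adj_sym andbCA. Qed.

Local Notation tree_maps := (parent_maps pg_rel 1 G^#).

Lemma tree_maps_step f x : f \in tree_maps -> x \in G^# ->
  [/\ f x \in G, pg_adj x (f x) & fconnect f x 1].
Proof.
by move=> /parent_mapsP/(_ x) + xG; rewrite xG => /andP[/and3P[_ -> ->] ->].
Qed.

Definition parent_edges f := [set [set x; f x] | x in G^#].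

Lemma parent_edges_inj : {in tree_maps &, injective parent_edges}.
Proof.
move=> f g fP gP eq_fg.
have swap y : y \in G^# -> f y != g y -> [/\ g (f y) = y, f y \in G^# & f (f y) != g (f y)].
  move=> yG neq_y; have [fyG _ y_to_1] := tree_maps_step fP yG.
  have : [set y; f y] \in parent_edges g by rewrite -eq_fg; apply: imset_f.
  case/imsetP=> z zG /eq_set2[[yz fy_gz] | [y_gz fy_z]]; subst z.
    by rewrite fy_gz eqxx in neq_y.
  split=> //; rewrite -y_gz; apply/eqP => ffy.
  case/fconnect_iterP: y_to_1 => n it1.
  have := iter_two_cycle n ffy; rewrite it1 => /set2P[] one_eq.
    by rewrite -one_eq setD11 in yG.
  by rewrite -one_eq setD11 in zG.
apply/ffunP => x0; have [x0G | x0G] := boolP (x0 \in G^#); last first.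
  by rewrite (parent_maps_out fP x0G) (parent_maps_out gP x0G).
apply/eqP/negPn/negP => neq_x0.
have disagree n : iter n f x0 \in G^# /\ f (iter n f x0) != g (iter n f x0).
  by elim: n => [|n [itG neq_it]] //=; have [_ -> ->] := swap _ itG neq_it.
have [_ _ /fconnect_iterP[n it1]] := tree_maps_step fP x0G.
by have [] := disagree n; rewrite it1 setD11.
Qed.

Lemma parent_edges_spanning f : f \in tree_maps -> pg_spanning_tree G (parent_edges f).
Proof.
move=> fP; set e := edge_rel (parent_edges f); apply/and3P; split.
- apply/subsetP => _ /imsetP[x xG ->]; have [fxG adj _] := tree_maps_step fP xG.
  by apply/imset2P; exists x (f x); rewrite ?inE ?fxG ?adj //; case/setD1P: xG.
- have e_f : subrel (frel f) (connect e).
    move=> y _ /eqP <-; have [yG | yG] := boolP (y \in G^#).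
      by apply: connect1; apply: imset_f.
    by rewrite (parent_maps_out fP yG).
  have to1 x : x \in G -> connect e x 1.
    move=> xG; have [-> // | x1] := eqVneq x 1.
    have xG1 : x \in G^# by rewrite !inE x1.
    by have [_ _] := tree_maps_step fP xG1; apply: connect_sub.
  apply/forallP => x; apply/implyP => xG; apply/forallP => y; apply/implyP => yG.
  by rewrite (connect_trans (to1 x xG)) // (sym_connect_sym (@edge_rel_sym _ _)) to1.
apply/forallP => n; apply/forallP => s; apply/implyP => n3; rewrite /ucycleb.
have [uniq_s | _] := boolP (uniq s); rewrite ?andbF ?andbT //.
apply: (no_descent_ucycle (f := f) (d := fun x => findex f x 1)); rewrite ?size_tuple //.
move=> u w /imsetP[z zG /eq_set2[[-> ->] | [-> ->]]]; [left | right]; split=> //.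
all: have [_ _ z_to_1] := tree_maps_step fP zG; apply: findex_step => //.
all: by case/setD1P: zG.
Qed.

Section TreeParent.
Variable T : {set {set gT}}.
Hypothesis treeT : pg_spanning_tree G T.
Local Notation e := (edge_rel T).
Local Notation dist := (root_dist e 1).

Lemma tree_edgeP x y : e x y -> [/\ x \in G, y \in G & pg_adj x y].
Proof.
case/and3P: treeT => /subsetP sTE _ _ /sTE /imset2P[a b aG].
rewrite inE => /andP[bG adj] /eq_set2[[-> ->] | [-> ->]] //.
by rewrite pg_adj_sym.
Qed.

Lemma tree_connect x y : x \in G -> y \in G -> connect e x y.
Proof. by case/and3P: treeT => _ /forall_inP conT _ xG; move/forall_inP: (conT x xG); apply. Qed.

Definition tree_parent :=
  [ffun x => if x \in G^# then odflt x [pick y | e x y && (dist y < dist x)] else x].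

Lemma tree_parent_step x : x \in G^# -> e x (tree_parent x) && (dist (tree_parent x) < dist x).
Proof.
move=> xG; rewrite ffunE xG; case: pickP => [y // | no_y].
case/setD1P: xG => x1 xG; have [y] := root_dist_step x1 (tree_connect xG (group1 G)).
by have := no_y y; rewrite /= => ->.
Qed.

Lemma tree_parent_maps : tree_parent \in tree_maps.
Proof.
apply/parent_mapsP => x; have [xG | xG] := ifPn; last by rewrite ffunE (negPf xG).
have [n] := ubnP (dist x); elim: n x xG => // n IHn x xG lt_xn.
case/andP: (tree_parent_step xG) => e_x lt_dist; have [x_G px_G adj] := tree_edgeP e_x.
rewrite /pg_rel x_G px_G adj /=; apply: connect_trans (fconnect1 _ _) _.
have [-> // | px1] := eqVneq (tree_parent x) 1.
have pxG : tree_parent x \in G^# by rewrite !inE px1.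
have lt_pn : dist (tree_parent x) < n by apply: leq_trans lt_dist _.
by case/andP: (IHn _ pxG lt_pn).
Qed.

Lemma parent_edges_tree_parent : parent_edges tree_parent = T.
Proof.
apply/eqP; rewrite eqEsubset; apply/andP; split.
  by apply/subsetP => _ /imsetP[x xG ->]; case/andP: (tree_parent_step xG).
apply/subsetP => E TE; case/and3P: (treeT) => /subsetP sTE _ acycT.
case/imset2P: (sTE _ TE) => u w uG; rewrite inE => /andP[wG adj] def_E; subst E.
apply/negPn/negP => E_notin; have neq_uw : u != w by case/andP: adj.
have /negP := acyclic_bridge acycT TE neq_uw; apply.
have sub_e : subrel (edge_rel (parent_edges tree_parent)) (edge_rel (T :\ [set u; w])).
  move=> a b e_ab; rewrite /edge_rel !inE; apply/andP; split.
    by apply: contraNneq E_notin => <-.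
  by case/imsetP: e_ab => x xG ->; case/andP: (tree_parent_step xG).
case/and3P: (parent_edges_spanning tree_parent_maps) => _ /forall_inP conT _.
by apply: connect_sub (forall_inP (conT u uG) w wG) => a b /sub_e; apply: connect1.
Qed.

End TreeParent.

Lemma kappa_parent_maps : kappa G = #|tree_maps|.
Proof.
rewrite /kappa -(card_in_imset parent_edges_inj); apply: eq_card => T; rewrite inE.
apply/idP/imsetP => [treeT | [f fP ->]]; last exact: parent_edges_spanning.
by exists (tree_parent T); rewrite ?tree_parent_maps ?parent_edges_tree_parent.
Qed.

Definition pgstar_component x := [set y in G^# | connect (pgstar_adj G) x y].

Lemma pgstar_adj_sym : symmetric (pgstar_adj G).
Proof. by move=> x y; rewrite /pgstar_adj pg_adj_sym andbCA. Qed.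

Section CliqueComponents.
Hypothesis cliques : components_are_cliques G.
Variable x : gT.
Hypothesis xG : x \in G^#.
Local Notation K := (pgstar_component x).

Lemma pgstar_component_id : x \in K.
Proof. by rewrite inE xG connect0. Qed.

Lemma pgstar_component_clique y z : y \in K -> z \in K -> y != z -> pg_adj y z.
Proof.
move=> /setIdP[yG x_y] /setIdP[zG x_z] neq_yz; apply: cliques => //.
by apply: connect_trans _ x_z; rewrite (sym_connect_sym pgstar_adj_sym).
Qed.

Lemma pg_rel_component y z : y \in K -> pg_rel y z = (z \in 1 |: K) && (z != y).
Proof.
move=> yK; have /setIdP[yG x_y] := yK; have [y1 y_G] := setD1P yG.
apply/and3P/andP => [[_ zG adj] | [/setU1P[-> | zK] neq_zy]].
- split; last by apply: contraTneq adj => ->; rewrite pg_adjxx.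
  have [-> | z1] := eqVneq z 1; first exact: setU11.
  have zG1 : z \in G^# by rewrite !inE z1.
  apply/setU1P; right; rewrite inE zG1; apply: connect_trans x_y (connect1 _).
  by rewrite /pgstar_adj yG zG1.
- by rewrite y_G group1 pg_adj1.
have /setIdP[/setD1P[_ z_G] _] := zK.
by rewrite y_G z_G pgstar_component_clique // eq_sym.
Qed.

Lemma pgstar_component_cycle : exists2 w, w \in G & K = <[w]> :\ 1.
Proof.
have [w wK w_max] := @arg_maxnP _ x (mem K) (fun y => #[y]) pgstar_component_id.
have /setIdP[/setD1P[w1 wG] _] := wK; exists w => //.
apply/setP => y; rewrite in_setD1; apply/idP/andP => [yK | [y1 yw]].
  split; first by case/setIdP: yK => /setD1P[].
  have [-> | neq_yw] := eqVneq y w; first exact: cycle_id.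
  have /andP[_ /orP[sub_yw | sub_wy]] := pgstar_component_clique yK wK neq_yw.
    by rewrite -cycle_subG.
  have le_yw : #[y] <= #[w] := w_max y yK.
  have : <[w]> == <[y]> by rewrite eqEcard sub_wy -!orderE le_yw.
  by move/eqP ->; apply: cycle_id.
have [-> // | neq_yw] := eqVneq y w.
have yG : y \in G by apply: subsetP yw; rewrite cycle_subG.
have yG1 : y \in G^# by rewrite !inE y1.
have /setIdP[wG1 x_w] := wK; rewrite inE yG1; apply: connect_trans x_w (connect1 _).
by rewrite /pgstar_adj wG1 yG1 /pg_adj eq_sym neq_yw /= [X in _ || X]cycle_subG yw orbT.
Qed.

End CliqueComponents.

Section PGroup.
Variable p : nat.
Hypotheses (pG : p.-group G) (cliques : components_are_cliques G).

Lemma pgstar_component_block x : x \in G^# -> exists2 w, x \in <[w]> &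
  [/\ #|parent_maps pg_rel 1 (pgstar_component x)| = (#[w] ^ (#[w] - 2))%N,
      p.-nat #[w], pgstar_component x \subset G^# & nbhd_closed pg_rel 1 (pgstar_component x)].
Proof.
move=> xG; have [w wG defK] := pgstar_component_cycle cliques xG.
have K1 : 1 \notin pgstar_component x by rewrite defK !inE eqxx.
have ordK : #[w] = #|pgstar_component x|.+1.
  by rewrite defK orderE (cardsD1 1 <[w]>) group1.
exists w; first by have := pgstar_component_id xG; rewrite defK => /setD1P[].
split.
- rewrite (card_parent_maps_clique K1) => [|y z yK]; last exact: pg_rel_component.
  by rewrite ordK subn2.
- exact: mem_p_elt pG wG.
- by apply/subsetP => y /setIdP[].
by move=> y yK z; rewrite (pg_rel_component cliques _ yK) => /andP[].
Qed.

Lemma pnat_card_parent_maps (A : {set gT}) : A \subset G^# -> nbhd_closed pg_rel 1 A ->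
  p.-nat #|parent_maps pg_rel 1 A|.
Proof.
have [n] := ubnP #|A|; elim: n A => // n IHn A ltAn sAG clA.
have [-> | /set0Pn[x xA]] := eqVneq A set0.
  by rewrite card_parent_maps_clique ?cards0 ?inE // => y; rewrite inE.
have xG := subsetP sAG x xA; have xK := pgstar_component_id xG.
have [w _ [cardK pw _ clK]] := pgstar_component_block xG.
have sKA : pgstar_component x \subset A.
  apply/subsetP => y yK; have [-> // | neq_yx] := eqVneq y x.
  have /setIdP[/setD1P[y1 _] _] := yK.
  have := clA x xA y; rewrite (pg_rel_component cliques _ xK).
  rewrite (setU1r 1 yK) neq_yx => /(_ isT)/setU1P[y1' | //].
  by rewrite y1' eqxx in y1.
have A1 : 1 \notin A by apply: contra (subsetP sAG 1) _; rewrite setD11.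
have clAK := nbhd_closedD pg_rel_sym A1 clA clK.
rewrite (card_parent_maps_setD A1 sKA clK clAK) pnatM cardK pnatX pw IHn //.
  have K_gt0 : 0 < #|pgstar_component x| by apply/card_gt0P; exists x.
  rewrite ltnS in ltAn; apply: leq_trans ltAn.
  by rewrite -(cardsID (pgstar_component x) A) (setIidPr sKA) -[X in X < _]add0n ltn_add2r.
exact: subset_trans (subsetDl _ _) sAG.
Qed.

End PGroup.

End PowerGraph.

Lemma primes_pnat p n : prime p -> p.-nat n -> 1 < n -> primes n = [:: p].
Proof. by move=> p_pr /p_natP[[|k] ->] // _; rewrite primesX // primes_prime. Qed.

Theorem corollary3p4 (gT : finGroupType) (G : {group gT}) (p : nat) :
  prime p -> (p.-group G)%g ->
  (exists x, x \in G /\ 2 < #[x]%g) ->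
  components_are_cliques G ->
  primes (kappa G) = [:: p].
Proof.
move=> p_pr pG [x [xG ord_x]] cliques.
have xG1 : x \in G^#%g by rewrite !inE xG andbT; apply: contraTneq ord_x => ->; rewrite order1.
have clG : nbhd_closed (pg_rel G) 1%g G^#%g by move=> y _ z /and3P[_ zG _]; rewrite setD1K.
have G1 : 1%g \notin G^#%g by rewrite setD11.
have [w xw [cardK _ sKG clK]] := pgstar_component_block pG cliques xG1.
have pk : p.-nat (kappa G) by rewrite kappa_parent_maps pnat_card_parent_maps.
rewrite (primes_pnat p_pr pk) //; move: pk.
have clGK := nbhd_closedD (@pg_rel_sym _ G) G1 clG clK.
rewrite kappa_parent_maps (card_parent_maps_setD G1 sKG clK clGK).
rewrite pnatM cardK => /andP[_ /andP[rest_gt0 _]].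
have ord_w : 2 < #[w]%g by apply: leq_trans ord_x (subset_leq_card _); rewrite cycle_subG.
apply: leq_trans (leq_pmulr _ rest_gt0).
by rewrite (leq_trans _ (leq_pexp2l _ (_ : 1 <= #[w]%g - 2))) ?expn1 //; lia.
Qed.
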